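(* Let $\underline x<\overline x$ and $\underline y<\overline y$ be real numbers and $\alpha\in\mathbb{R}$. Then the convex hull of $$T_\alpha=\{(x,y)\in\mathbb{R}^2:\ xy=\alpha,\ x\in[\underline x,\overline x],\ y\in[\underline y,\overline y]\}$$ is second-order cone representable.
   Context: A set $S\subseteq\mathbb{R}^n$ is second-order cone representable if it is the projection onto the first $n$ coordinates of a set $\{(x,u)\in\mathbb{R}^n\times\mathbb{R}^m\}$ defined by finitely many linear equalities/inequalities and constraints of the form $\|A_k(x,u)+b_k\|_2\le c_k^T(x,u)+d_k$. *)

From Stdlib Require Import Reals List.
Import ListNotations.
Open Scope R_scope.

(* Points of R^k are represented as functions nat -> R; a point of R^k is
   "canonical" when all coordinates of index >= k vanish. *)
Definition canonical (k : nat) (x : nat -> R) : Prop :=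
  forall i, (k <= i)%nat -> x i = 0.

Fixpoint sumR (k : nat) (f : nat -> R) : R :=
  match k with
  | O => 0
  | S k' => sumR k' f + f k'
  end.

Definition dotn (k : nat) (a z : nat -> R) : R := sumR k (fun i => a i * z i).

Definition join (n : nat) (x u : nat -> R) : nat -> R :=
  fun i => if Nat.ltb i n then x i else u (i - n)%nat.

(* A second-order cone constraint ||A z + b||_2 <= c^T z + d on R^N,
   where A has soc_rows rows (row r is the coefficient vector soc_A r). *)
Record soc_constraint := {
  soc_rows : nat;
  soc_A : nat -> nat -> R;
  soc_b : nat -> R;
  soc_c : nat -> R;
  soc_d : R }.

Definition soc_holds (N : nat) (C : soc_constraint) (z : nat -> R) : Prop :=
  sqrt (sumR (soc_rows C) (fun r => (dotn N (soc_A C r) z + soc_b C r) ^ 2))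
  <= dotn N (soc_c C) z + soc_d C.

(* S (a subset of R^n, tested on canonical points) is second-order cone
   representable: it is the projection onto the first n coordinates of a set
   {(x,u) in R^n x R^m} described by finitely many linear equalities
   a^T(x,u) = beta, linear inequalities a^T(x,u) <= beta and SOC constraints. *)
Definition soc_representable (n : nat) (S : (nat -> R) -> Prop) : Prop :=
  exists (m : nat) (eqs ineqs : list ((nat -> R) * R)) (socs : list soc_constraint),
    forall x, canonical n x ->
      (S x <->
       exists u : nat -> R,
         let z := join n x u in
         Forall (fun e => dotn (n + m) (fst e) z = snd e) eqs /\
         Forall (fun e => dotn (n + m) (fst e) z <= snd e) ineqs /\
         Forall (fun C => soc_holds (n + m) C z) socs).

Definition conv_hull (S : (nat -> R) -> Prop) (x : nat -> R) : Prop :=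
  exists l : list (R * (nat -> R)),
    Forall (fun wp => 0 <= fst wp /\ S (snd wp)) l /\
    fold_right (fun wp acc => fst wp + acc) 0 l = 1 /\
    forall i, x i = fold_right (fun wp acc => fst wp * snd wp i + acc) 0 l.

Definition T_alpha (xl xu yl yu alpha : R) (p : nat -> R) : Prop :=
  canonical 2 p /\ p 0%nat * p 1%nat = alpha /\
  xl <= p 0%nat <= xu /\ yl <= p 1%nat <= yu.

(* Split T_alpha into two parts whose convex hulls are the slices [l = 1] of
   second-order cone representable closed convex cones [K1], [K2] in (l, x, y)-space
   with no recession directions.  For alpha <> 0 the parts are the two branches of
   the hyperbola; in suitable coordinates each is an arc [{(X, b / X) : A <= X <= B}]
   of [XY = b] with [0 < A], whose hull is bounded by the chord through its endpoints
   and by [b <= XY], i.e. [sqrt (4 b + (X - Y)^2) <= X + Y].  For alpha = 0 they are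
   the two segments on the axes.  Disjunctive programming then writes conv T_alpha as
   the projection of [{(x1 + x2, y1 + y2) : (l_i, x_i, y_i) in K_i, l1 + l2 = 1, l_i >= 0}];
   a term with [l_i = 0] must vanish, which is where the recession cones are used. *)

From Stdlib Require Import Reals Rgeom List Lra Lia FunctionalExtensionality.
Import ListNotations.
Open Scope R_scope.

Lemma sqrt_le_iff S w : 0 <= S -> (sqrt S <= w <-> 0 <= w /\ S <= w ^ 2).
Proof.
  intros hS; split.
  - intros h; pose proof (sqrt_pos S) as h0; split; [lra|].
    rewrite <- (pow2_sqrt S hS); apply pow_incr; lra.
  - intros [hw h]; rewrite <- (sqrt_pow2 w hw); now apply sqrt_le_1_alt.
Qed.

Lemma norm2_triangle a1 b1 a2 b2 :
  sqrt ((a1 + a2) ^ 2 + (b1 + b2) ^ 2) <= sqrt (a1 ^ 2 + b1 ^ 2) + sqrt (a2 ^ 2 + b2 ^ 2).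
Proof.
  pose proof (triangle (a1 + a2) (b1 + b2) 0 0 a2 b2) as h.
  unfold dist_euc in h; now rewrite !Rsqr_pow2, !Rminus_0_r, !Rplus_minus_r in h.
Qed.

Lemma norm2_scale c a b : 0 <= c -> sqrt ((c * a) ^ 2 + (c * b) ^ 2) = c * sqrt (a ^ 2 + b ^ 2).
Proof.
  intros hc; replace ((c * a) ^ 2 + (c * b) ^ 2) with (c ^ 2 * (a ^ 2 + b ^ 2)) by ring.
  rewrite sqrt_mult by nra; now rewrite sqrt_pow2.
Qed.

(* A convex cone in (l, x, y)-space, [l] being the homogenizing coordinate: see
   [in_cone]. *)
Record cone3 := {
  cone_cuts : list (R * R * R);
  cone_nl : R; cone_nx : R; cone_ny : R;
  cone_cx : R; cone_cy : R }.

Definition cut_holds (e : R * R * R) (l x y : R) : Prop :=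
  let '(a, b, c) := e in a * l + b * x + c * y <= 0.

Definition in_cone (P : cone3) (l x y : R) : Prop :=
  Forall (fun e => cut_holds e l x y) (cone_cuts P) /\
  sqrt ((cone_nl P * l) ^ 2 + (cone_nx P * x + cone_ny P * y) ^ 2)
    <= cone_cx P * x + cone_cy P * y.

Lemma in_cone_add P l1 x1 y1 l2 x2 y2 :
  in_cone P l1 x1 y1 -> in_cone P l2 x2 y2 -> in_cone P (l1 + l2) (x1 + x2) (y1 + y2).
Proof.
  intros [c1 s1] [c2 s2]; split.
  - rewrite Forall_forall in *; intros [[a b] c] he.
    specialize (c1 _ he); specialize (c2 _ he); simpl in *; lra.
  - replace (cone_cx P * (x1 + x2) + cone_cy P * (y1 + y2))
      with ((cone_cx P * x1 + cone_cy P * y1) + (cone_cx P * x2 + cone_cy P * y2)) by ring.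
    eapply Rle_trans; [|apply Rplus_le_compat; [exact s1|exact s2]].
    eapply Rle_trans; [|apply norm2_triangle].
    right; f_equal; ring.
Qed.

Lemma in_cone_scale P c l x y : 0 <= c -> in_cone P l x y -> in_cone P (c * l) (c * x) (c * y).
Proof.
  intros hc [cs s]; split.
  - rewrite Forall_forall in *; intros [[a b] d] he.
    specialize (cs _ he); simpl in *; nra.
  - replace (cone_nl P * (c * l)) with (c * (cone_nl P * l)) by ring.
    replace (cone_nx P * (c * x) + cone_ny P * (c * y))
      with (c * (cone_nx P * x + cone_ny P * y)) by ring.
    rewrite norm2_scale by exact hc.
    replace (cone_cx P * (c * x) + cone_cy P * (c * y))
      with (c * (cone_cx P * x + cone_cy P * y)) by ring.
    now apply Rmult_le_compat_l.
Qed.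

Lemma in_cone_0 P : in_cone P 0 0 0.
Proof.
  split.
  - apply Forall_forall; intros [[a b] c] _; simpl; lra.
  - replace ((cone_nl P * 0) ^ 2 + (cone_nx P * 0 + cone_ny P * 0) ^ 2) with 0 by ring.
    rewrite sqrt_0; lra.
Qed.

Definition pt2 (x y : R) : nat -> R :=
  fun i => match i with 0%nat => x | 1%nat => y | _ => 0 end.

Lemma canonical_pt2 p : canonical 2 p -> p = pt2 (p 0%nat) (p 1%nat).
Proof.
  intros hp; extensionality i; destruct i as [|[|i]]; simpl; auto.
  apply hp; lia.
Qed.

Lemma conv_hull_of_mem (T : (nat -> R) -> Prop) p : T p -> conv_hull T p.
Proof.
  intros hp; exists [(1, p)]; simpl; repeat split.
  - constructor; [simpl; split; [lra|exact hp]|constructor].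
  - ring.
  - intros i; ring.
Qed.

Definition weight_sum (l : list (R * (nat -> R))) : R :=
  fold_right (fun wp acc => fst wp + acc) 0 l.

Definition point_sum (l : list (R * (nat -> R))) (i : nat) : R :=
  fold_right (fun wp acc => fst wp * snd wp i + acc) 0 l.

Definition rescale (c : R) (l : list (R * (nat -> R))) : list (R * (nat -> R)) :=
  map (fun wp => (c * fst wp, snd wp)) l.

Lemma weight_sum_app l1 l2 : weight_sum (l1 ++ l2) = weight_sum l1 + weight_sum l2.
Proof.
  induction l1 as [|wp l1 IH]; simpl; [ring|].
  unfold weight_sum in *; simpl; rewrite IH; ring.
Qed.

Lemma point_sum_app l1 l2 i : point_sum (l1 ++ l2) i = point_sum l1 i + point_sum l2 i.
Proof.
  induction l1 as [|wp l1 IH]; simpl; [ring|].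
  unfold point_sum in *; simpl; rewrite IH; ring.
Qed.

Lemma weight_sum_rescale c l : weight_sum (rescale c l) = c * weight_sum l.
Proof. induction l as [|wp l IH]; unfold weight_sum in *; simpl; [ring|]; rewrite IH; ring. Qed.

Lemma point_sum_rescale c l i : point_sum (rescale c l) i = c * point_sum l i.
Proof. induction l as [|wp l IH]; unfold point_sum in *; simpl; [ring|]; rewrite IH; ring. Qed.

Lemma conv_hull_convex (T : (nat -> R) -> Prop) a p q : 0 <= a <= 1 ->
  conv_hull T p -> conv_hull T q -> conv_hull T (fun i => a * p i + (1 - a) * q i).
Proof.
  intros ha [l1 [f1 [w1 e1]]] [l2 [f2 [w2 e2]]].
  exists (rescale a l1 ++ rescale (1 - a) l2); repeat split.
  - apply Forall_app; unfold rescale; rewrite !Forall_map; split.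
    + eapply Forall_impl; [|exact f1]; simpl; intros wp [h h']; split; [nra|exact h'].
    + eapply Forall_impl; [|exact f2]; simpl; intros wp [h h']; split; [nra|exact h'].
  - change (weight_sum (rescale a l1 ++ rescale (1 - a) l2) = 1).
    rewrite weight_sum_app, !weight_sum_rescale; unfold weight_sum; rewrite w1, w2; ring.
  - intros i; change (a * p i + (1 - a) * q i = point_sum (rescale a l1 ++ rescale (1 - a) l2) i).
    rewrite point_sum_app, !point_sum_rescale; unfold point_sum; rewrite <- e1, <- e2; ring.
Qed.

Lemma conv_hull_pt2_convex (T : (nat -> R) -> Prop) a x1 y1 x2 y2 : 0 <= a <= 1 ->
  conv_hull T (pt2 x1 y1) -> conv_hull T (pt2 x2 y2) ->
  conv_hull T (pt2 (a * x1 + (1 - a) * x2) (a * y1 + (1 - a) * y2)).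
Proof.
  intros ha h1 h2.
  replace (pt2 (a * x1 + (1 - a) * x2) (a * y1 + (1 - a) * y2))
    with (fun i => a * pt2 x1 y1 i + (1 - a) * pt2 x2 y2 i).
  - now apply conv_hull_convex.
  - extensionality i; destruct i as [|[|i]]; simpl; ring.
Qed.

(* [P] is an extended formulation of [conv (T ∩ Rg)]: its slice [l = 1] lies
   between [T ∩ Rg] and [conv T], and its slice [l = 0] is trivial. *)
Definition tight_cone (T : (nat -> R) -> Prop) (Rg : R -> R -> Prop) (P : cone3) : Prop :=
  (forall x y, T (pt2 x y) -> Rg x y -> in_cone P 1 x y) /\
  (forall x y, in_cone P 1 x y -> conv_hull T (pt2 x y)) /\
  (forall x y, in_cone P 0 x y -> x = 0 /\ y = 0).

Definition cone_sum (P1 P2 : cone3) (p : nat -> R) : Prop :=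
  exists l1 x1 y1 l2 x2 y2,
    0 <= l1 /\ 0 <= l2 /\ l1 + l2 = 1 /\ p 0%nat = x1 + x2 /\ p 1%nat = y1 + y2 /\
    in_cone P1 l1 x1 y1 /\ in_cone P2 l2 x2 y2.

Definition at3 (k : nat) (a b c : R) : nat -> R :=
  fun i => if i =? k then a else if i =? S k then b else if i =? S (S k) then c else 0.

Lemma dotn8_at3 k a b c z : (k <= 5)%nat ->
  dotn 8 (at3 k a b c) z = a * z k + b * z (S k) + c * z (S (S k)).
Proof.
  intros hk; unfold dotn, at3.
  do 6 (destruct k as [|k]; [simpl; ring|]); lia.
Qed.

Definition cone_cut_rows (P : cone3) (k : nat) : list ((nat -> R) * R) :=
  map (fun '(a, b, c) => (at3 k a b c, 0)) (cone_cuts P).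

Definition cone_soc_row (P : cone3) (k : nat) : soc_constraint :=
  {| soc_rows := 2;
     soc_A := fun r => match r with
                       | 0%nat => at3 k (cone_nl P) 0 0
                       | _ => at3 k 0 (cone_nx P) (cone_ny P) end;
     soc_b := fun _ => 0;
     soc_c := at3 k 0 (cone_cx P) (cone_cy P);
     soc_d := 0 |}.

Lemma cone_rows_iff P k z : (k <= 5)%nat ->
  (Forall (fun e => dotn 8 (fst e) z <= snd e) (cone_cut_rows P k) /\
   soc_holds 8 (cone_soc_row P k) z)
  <-> in_cone P (z k) (z (S k)) (z (S (S k))).
Proof.
  intros hk; unfold in_cone, cone_cut_rows, soc_holds, cone_soc_row.
  cbn [soc_rows soc_A soc_b soc_c soc_d sumR]; rewrite !dotn8_at3 by exact hk.
  rewrite Forall_map, !Forall_forall.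
  match goal with
  | |- _ /\ sqrt ?a <= ?b <-> _ /\ sqrt ?c <= ?d =>
      replace a with c by ring; replace b with d by ring end.
  split; intros [hc hs]; split; auto; intros [[a b] c] he; specialize (hc _ he);
    simpl in *; rewrite ?dotn8_at3 in * by exact hk; lra.
Qed.

(* A point of R^8 is [(x, y, l1, x1, y1, l2, x2, y2)]; the equations say
   [x = x1 + x2], [y = y1 + y2] and [l1 + l2 = 1]. *)
Definition sum_eqs : list ((nat -> R) * R) :=
  [ ((fun i => match i with 0%nat => 1 | 3%nat => -1 | 6%nat => -1 | _ => 0 end), 0);
    ((fun i => match i with 1%nat => 1 | 4%nat => -1 | 7%nat => -1 | _ => 0 end), 0);
    ((fun i => match i with 2%nat => 1 | 5%nat => 1 | _ => 0 end), 1) ].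

Definition sum_ineqs (P1 P2 : cone3) : list ((nat -> R) * R) :=
  (at3 2 (-1) 0 0, 0) :: (at3 5 (-1) 0 0, 0) :: cone_cut_rows P1 2 ++ cone_cut_rows P2 5.

Definition sum_socs (P1 P2 : cone3) : list soc_constraint :=
  [cone_soc_row P1 2; cone_soc_row P2 5].

Lemma cone_sum_encoding P1 P2 x :
  cone_sum P1 P2 x <->
  exists u : nat -> R, let z := join 2 x u in
    Forall (fun e => dotn (2 + 6) (fst e) z = snd e) sum_eqs /\
    Forall (fun e => dotn (2 + 6) (fst e) z <= snd e) (sum_ineqs P1 P2) /\
    Forall (fun C => soc_holds (2 + 6) C z) (sum_socs P1 P2).
Proof.
  change (2 + 6)%nat with 8%nat; cbv zeta.
  unfold sum_eqs, sum_ineqs, sum_socs; split.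
  - intros (l1 & x1 & y1 & l2 & x2 & y2 & h1 & h2 & hs & ex & ey & c1 & c2).
    exists (fun k => match k with 0%nat => l1 | 1%nat => x1 | 2%nat => y1
                    | 3%nat => l2 | 4%nat => x2 | _ => y2 end).
    set (z := join 2 x _).
    apply (cone_rows_iff P1 2 z) in c1; [|lia].
    apply (cone_rows_iff P2 5 z) in c2; [|lia].
    destruct c1 as [l1s s1]; destruct c2 as [l2s s2].
    split; [|split].
    + repeat (apply Forall_cons; [unfold dotn, z, join; simpl; lra|]); apply Forall_nil.
    + do 2 (apply Forall_cons;
        [cbn [fst snd]; rewrite dotn8_at3 by lia; unfold z, join; simpl; lra|]).
      apply Forall_app; now split.
    + now repeat apply Forall_cons.
  - intros [u (he & hi & hs)]; set (z := join 2 x u) in *.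
    inversion he as [|? ? e1 he1]; inversion he1 as [|? ? e2 he2]; inversion he2 as [|? ? e3 _].
    rewrite !Forall_cons_iff, Forall_app in hi; destruct hi as (i1 & i2 & r1 & r2).
    rewrite !Forall_cons_iff in hs; destruct hs as (s1 & s2 & _).
    pose proof (proj1 (cone_rows_iff P1 2 z ltac:(lia)) (conj r1 s1)) as c1.
    pose proof (proj1 (cone_rows_iff P2 5 z ltac:(lia)) (conj r2 s2)) as c2.
    cbn [fst snd] in *; rewrite !dotn8_at3 in i1, i2 by lia.
    unfold dotn, z, join in e1, e2, e3, i1, i2, c1, c2; simpl in e1, e2, e3, i1, i2, c1, c2.
    exists (u 0%nat), (u 1%nat), (u 2%nat), (u 3%nat), (u 4%nat), (u 5%nat).
    repeat split; try apply c1; try apply c2; lra.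
Qed.

Section TwoCones.

Variables (T : (nat -> R) -> Prop) (R1 R2 : R -> R -> Prop) (P1 P2 : cone3).
Hypothesis T_canonical : forall p, T p -> canonical 2 p.
Hypothesis tight1 : tight_cone T R1 P1.
Hypothesis tight2 : tight_cone T R2 P2.
Hypothesis cover : forall x y, T (pt2 x y) -> R1 x y \/ R2 x y.

Lemma conv_hull_sub_cone_sum p : conv_hull T p -> cone_sum P1 P2 p.
Proof.
  intros [l [hl [hw hp]]].
  assert (partial : exists l1 x1 y1 l2 x2 y2,
    0 <= l1 /\ 0 <= l2 /\ l1 + l2 = weight_sum l /\
    point_sum l 0 = x1 + x2 /\ point_sum l 1 = y1 + y2 /\
    in_cone P1 l1 x1 y1 /\ in_cone P2 l2 x2 y2).
  { clear hw hp; induction hl as [|[w q] l [hw hq] hl IH].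
    - exists 0, 0, 0, 0, 0, 0; unfold weight_sum, point_sum; simpl.
      do 5 (split; [lra|]); split; apply in_cone_0.
    - destruct IH as (l1 & x1 & y1 & l2 & x2 & y2 & h1 & h2 & hs & ex & ey & c1 & c2).
      unfold weight_sum, point_sum in *; simpl in *.
      assert (hq2 : T (pt2 (q 0%nat) (q 1%nat))) by (now rewrite <- canonical_pt2 by auto).
      destruct tight1 as [sub1 _]; destruct tight2 as [sub2 _].
      destruct (cover _ _ hq2) as [r | r].
      + pose proof (in_cone_scale _ _ _ _ _ hw (sub1 _ _ hq2 r)) as c.
        rewrite Rmult_1_r in c.
        exists (w + l1), (w * q 0%nat + x1), (w * q 1%nat + y1), l2, x2, y2.
        do 5 (split; [lra|]); split; [now apply in_cone_add | exact c2].
      + pose proof (in_cone_scale _ _ _ _ _ hw (sub2 _ _ hq2 r)) as c.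
        rewrite Rmult_1_r in c.
        exists l1, x1, y1, (w + l2), (w * q 0%nat + x2), (w * q 1%nat + y2).
        do 5 (split; [lra|]); split; [exact c1 | now apply in_cone_add]. }
  destruct partial as (l1 & x1 & y1 & l2 & x2 & y2 & h1 & h2 & hs & ex & ey & c1 & c2).
  exists l1, x1, y1, l2, x2, y2; rewrite !hp; unfold weight_sum, point_sum in *.
  do 5 (split; [lra|]); split; assumption.
Qed.

Lemma cone_sum_sub_conv_hull p : canonical 2 p -> cone_sum P1 P2 p -> conv_hull T p.
Proof.
  intros hp (l1 & x1 & y1 & l2 & x2 & y2 & h1 & h2 & hs & ex & ey & c1 & c2).
  rewrite (canonical_pt2 p hp), ex, ey.
  destruct tight1 as (_ & hull1 & rec1); destruct tight2 as (_ & hull2 & rec2).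
  destruct (Req_dec l1 0) as [z1 | n1].
  { subst l1; destruct (rec1 _ _ c1) as [-> ->]; rewrite !Rplus_0_l.
    replace l2 with 1 in c2 by lra; now apply hull2. }
  destruct (Req_dec l2 0) as [z2 | n2].
  { subst l2; destruct (rec2 _ _ c2) as [-> ->]; rewrite !Rplus_0_r.
    replace l1 with 1 in c1 by lra; now apply hull1. }
  apply (in_cone_scale _ (/ l1)) in c1; [|apply Rlt_le, Rinv_0_lt_compat; lra].
  apply (in_cone_scale _ (/ l2)) in c2; [|apply Rlt_le, Rinv_0_lt_compat; lra].
  rewrite Rinv_l in c1, c2 by assumption.
  assert (e2 : 1 - l1 = l2) by lra.
  replace (x1 + x2) with (l1 * (/ l1 * x1) + (1 - l1) * (/ l2 * x2))
    by (rewrite e2; field; auto).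
  replace (y1 + y2) with (l1 * (/ l1 * y1) + (1 - l1) * (/ l2 * y2))
    by (rewrite e2; field; auto).
  apply conv_hull_pt2_convex; auto; lra.
Qed.

Theorem soc_representable_conv_hull_two_cones : soc_representable 2 (conv_hull T).
Proof.
  exists 6%nat, sum_eqs, (sum_ineqs P1 P2), (sum_socs P1 P2).
  intros x hx; rewrite <- cone_sum_encoding; split.
  - apply conv_hull_sub_cone_sum.
  - now apply cone_sum_sub_conv_hull.
Qed.

End TwoCones.

Definition box_cone (a b c d : R) : cone3 :=
  {| cone_cuts := [(a, -1, 0); (-b, 1, 0); (c, 0, -1); (-d, 0, 1)];
     cone_nl := 0; cone_nx := 0; cone_ny := 0; cone_cx := 0; cone_cy := 0 |}.

Lemma in_box_cone a b c d l x y :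
  in_cone (box_cone a b c d) l x y <-> a * l <= x <= b * l /\ c * l <= y <= d * l.
Proof.
  unfold in_cone, box_cone; cbn [cone_cuts cone_nl cone_nx cone_ny cone_cx cone_cy].
  rewrite !Forall_cons_iff; cbn [cut_holds].
  replace ((0 * l) ^ 2 + (0 * x + 0 * y) ^ 2) with 0 by ring; rewrite sqrt_0.
  split; [intros ((? & ? & ? & ? & _) & _) | intros ([? ?] & [? ?])];
    repeat split; try apply Forall_nil; lra.
Qed.

Lemma tight_box_cone T (Rg : R -> R -> Prop) a b c d :
  (forall x y, T (pt2 x y) -> Rg x y -> a <= x <= b /\ c <= y <= d) ->
  (forall x y, a <= x <= b -> c <= y <= d -> T (pt2 x y)) ->
  tight_cone T Rg (box_cone a b c d).
Proof.
  intros hsub hbox; split; [|split].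
  - intros x y hT hR; apply in_box_cone; rewrite !Rmult_1_r; now apply hsub.
  - intros x y h; apply in_box_cone in h; rewrite !Rmult_1_r in h.
    apply conv_hull_of_mem, hbox; tauto.
  - intros x y h; apply in_box_cone in h; lra.
Qed.

(* In the coordinates [X = s x], [Y = t y]: the conic hull of the hyperbola arc
   [{(X, b / X) : A <= X <= B}], cut out by [A <= X <= B], the chord through the
   endpoints of the arc, and [b <= X Y] written as a second-order cone. *)
Definition arc_cone (s t A B b : R) : cone3 :=
  {| cone_cuts := [(A, -s, 0); (-B, s, 0); (-b * (A + B), b * s, A * B * t)];
     cone_nl := 2 * sqrt b; cone_nx := s; cone_ny := -t; cone_cx := s; cone_cy := t |}.

Lemma in_arc_cone s t A B b l x y : 0 <= b ->
  in_cone (arc_cone s t A B b) l x y <->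
  A * l <= s * x <= B * l /\ A * B * (t * y) <= b * (l * (A + B) - s * x) /\
  0 <= s * x + t * y /\ b * l ^ 2 <= (s * x) * (t * y).
Proof.
  intros hb; unfold in_cone, arc_cone.
  cbn [cone_cuts cone_nl cone_nx cone_ny cone_cx cone_cy].
  rewrite !Forall_cons_iff; cbn [cut_holds].
  rewrite sqrt_le_iff by (apply Rplus_le_le_0_compat; apply pow2_ge_0).
  replace ((2 * sqrt b * l) ^ 2) with (4 * sqrt b ^ 2 * l ^ 2) by ring.
  rewrite pow2_sqrt by exact hb.
  split; [intros ((? & ? & ? & _) & ? & ?) | intros ([? ?] & ? & ? & ?)];
    repeat split; try apply Forall_nil; lra.
Qed.

Lemma conv_hull_under_chord (T : (nat -> R) -> Prop) s t A B b X Y :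
  0 < A -> 0 < b ->
  (forall X', A <= X' <= B -> conv_hull T (pt2 (s * X') (t * (b / X')))) ->
  A <= X <= B -> A * B * Y <= b * (A + B - X) -> b <= X * Y ->
  conv_hull T (pt2 (s * X) (t * Y)).
Proof.
  intros hA hb arc hX chord hyp.
  (* [Y] lies between the arc height [g] and the chord height [h] above [X]. *)
  set (g := b / X); set (h := b * (A + B - X) / (A * B)).
  assert (hg : g <= Y) by (unfold g; apply (Rmult_le_reg_l X); [lra|]; field_simplify; lra).
  assert (hh : Y <= h).
  { unfold h; apply (Rmult_le_reg_l (A * B)); [nra|]; field_simplify; lra. }
  destruct (Req_dec h g) as [e | ne].
  { replace Y with (b / X) by (fold g; lra); apply arc; lra. }
  (* At an endpoint of [A, B] the chord meets the arc. *)
  assert (hAX : A < X < B).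
  { split; apply Rnot_le_lt; intros hle; apply ne; unfold h, g.
    - replace X with A by lra; field; lra.
    - replace X with B by lra; field; lra. }
  set (nu := (B - X) / (B - A)); set (mu := (Y - g) / (h - g)).
  assert (hnu : 0 <= nu <= 1).
  { unfold nu; split; [apply Rmult_le_pos; [lra | apply Rlt_le, Rinv_0_lt_compat; lra]|].
    apply (Rmult_le_reg_l (B - A)); [lra|]; field_simplify; lra. }
  assert (hmu : 0 <= mu <= 1).
  { unfold mu; split; [apply Rmult_le_pos; [lra | apply Rlt_le, Rinv_0_lt_compat; lra]|].
    apply (Rmult_le_reg_l (h - g)); [lra|]; field_simplify; lra. }
  assert (on_chord : conv_hull T (pt2 (s * X) (t * h))).
  { replace (s * X) with (nu * (s * A) + (1 - nu) * (s * B)) by (unfold nu; field; lra).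
    replace (t * h) with (nu * (t * (b / A)) + (1 - nu) * (t * (b / B)))
      by (unfold nu, h; field; lra).
    apply conv_hull_pt2_convex; [exact hnu | apply arc; lra | apply arc; lra]. }
  replace (s * X) with (mu * (s * X) + (1 - mu) * (s * X)) by ring.
  replace (t * Y) with (mu * (t * h) + (1 - mu) * (t * g)) by (unfold mu; field; lra).
  apply conv_hull_pt2_convex; [exact hmu | exact on_chord | apply arc; lra].
Qed.

Lemma div_le_iff_le_mul b X c : 0 < X -> 0 < c -> (b / X <= c <-> b / c <= X).
Proof.
  intros hX hc; split; intros h.
  - apply (Rmult_le_reg_l c); [exact hc|]; apply (Rmult_le_compat_r X) in h; [|lra].
    field_simplify in h; [|lra]; field_simplify; lra.
  - apply (Rmult_le_reg_l X); [exact hX|]; apply (Rmult_le_compat_r c) in h; [|lra].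
    field_simplify in h; [|lra]; field_simplify; lra.
Qed.

Lemma le_div_iff_mul_le b X c : 0 < X -> 0 < c -> (c <= b / X <-> X <= b / c).
Proof.
  intros hX hc; split; intros h.
  - apply (Rmult_le_reg_l c); [exact hc|]; apply (Rmult_le_compat_r X) in h; [|lra].
    field_simplify in h; [|lra]; field_simplify; lra.
  - apply (Rmult_le_reg_l X); [exact hX|]; apply (Rmult_le_compat_r c) in h; [|lra].
    field_simplify in h; [|lra]; field_simplify; lra.
Qed.

Lemma hyperbola_window a1 a2 b1 b2 b : 0 < b ->
  (forall X, 0 < X -> ~ (a1 <= X <= a2 /\ b1 <= b / X <= b2)) \/
  exists A B, 0 < A <= B /\
    forall X, 0 < X -> (a1 <= X <= a2 /\ b1 <= b / X <= b2 <-> A <= X <= B).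
Proof.
  intros hb.
  assert (pos : forall X, 0 < X -> 0 < b / X) by (intros X hX; apply Rdiv_lt_0_compat; lra).
  destruct (Rle_lt_dec b2 0) as [hb2 | hb2].
  { left; intros X hX [_ [_ h]]; specialize (pos X hX); lra. }
  assert (interval : exists A B, 0 < A /\
    forall X, 0 < X -> (a1 <= X <= a2 /\ b1 <= b / X <= b2 <-> A <= X <= B)).
  { assert (hA : 0 < Rmax a1 (b / b2)) by (unfold Rmax; destruct Rle_dec; apply pos in hb2; lra).
    destruct (Rle_lt_dec b1 0) as [hb1 | hb1].
    - exists (Rmax a1 (b / b2)), a2; split; [exact hA|]; intros X hX.
      rewrite div_le_iff_le_mul by assumption; specialize (pos X hX).
      unfold Rmax; destruct Rle_dec; split; intros; lra.
    - exists (Rmax a1 (b / b2)), (Rmin a2 (b / b1)); split; [exact hA|]; intros X hX.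
      rewrite div_le_iff_le_mul, le_div_iff_mul_le by assumption.
      unfold Rmax, Rmin; do 2 destruct Rle_dec; split; intros; lra. }
  destruct interval as (A & B & hA & hiff).
  destruct (Rle_lt_dec A B) as [hAB | hBA].
  - right; exists A, B; split; [lra | exact hiff].
  - left; intros X hX hw; apply hiff in hw; [lra | exact hX].
Qed.

Lemma sign_involutive s x : s * s = 1 -> s * (s * x) = x.
Proof. intros hs; rewrite <- Rmult_assoc, hs; ring. Qed.

Lemma tight_arc_cone T s t A B b :
  s * s = 1 -> t * t = 1 -> 0 < A <= B -> 0 < b ->
  (forall x y, T (pt2 x y) -> 0 < s * x -> A <= s * x <= B /\ (s * x) * (t * y) = b) ->
  (forall X, A <= X <= B -> T (pt2 (s * X) (t * (b / X)))) ->
  tight_cone T (fun x _ => 0 < s * x) (arc_cone s t A B b).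
Proof.
  intros hs ht hAB hb branch arc; split; [|split].
  - intros x y hT hx; destruct (branch x y hT hx) as [hX hXY].
    apply in_arc_cone; [lra|].
    assert (hY : 0 < t * y) by nra.
    assert (0 <= (s * x - A) * (B - s * x)) by (apply Rmult_le_pos; lra).
    split; [lra|]; split; [|split; [lra | nra]].
    apply (Rmult_le_reg_l (s * x)); [exact hx|]; nra.
  - intros x y h; apply in_arc_cone in h; [|lra].
    destruct h as (hX & chord & _ & hyp).
    rewrite <- (sign_involutive s x hs), <- (sign_involutive t y ht).
    apply (conv_hull_under_chord T s t A B b); try lra.
    intros X' hX'; now apply conv_hull_of_mem, arc.
  - intros x y h; apply in_arc_cone in h; [|lra].
    destruct h as (hX & chord & hsum & _).
    assert (hx : s * x = 0) by lra.
    assert (hy : t * y = 0) by (rewrite hx in chord, hsum; assert (0 < A * B) by nra; nra).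
    split; [rewrite <- (sign_involutive s x hs), hx | rewrite <- (sign_involutive t y ht), hy];
      ring.
Qed.

Lemma T_alpha_pt2 xl xu yl yu alpha x y :
  T_alpha xl xu yl yu alpha (pt2 x y) <->
  x * y = alpha /\ xl <= x <= xu /\ yl <= y <= yu.
Proof.
  unfold T_alpha; cbn [pt2]; split; [tauto|]; intros h; split; [|exact h].
  intros [|[|i]] hi; [lia | lia | reflexivity].
Qed.

Lemma sign_interval s lo hi X : s = 1 \/ s = -1 -> lo <= hi ->
  (lo <= s * X <= hi <-> Rmin (s * lo) (s * hi) <= X <= Rmax (s * lo) (s * hi)).
Proof. intros [-> | ->] h; unfold Rmin, Rmax; destruct Rle_dec; lra. Qed.

Lemma tight_cone_hyperbola_branch xl xu yl yu alpha s t : xl < xu -> yl < yu ->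
  s = 1 \/ s = -1 -> t = 1 \/ t = -1 -> 0 < s * t * alpha ->
  exists P, tight_cone (T_alpha xl xu yl yu alpha) (fun x _ => 0 < s * x) P.
Proof.
  intros hx hy hs ht hb; set (b := s * t * alpha) in hb.
  assert (hs2 : s * s = 1) by (destruct hs as [-> | ->]; ring).
  assert (ht2 : t * t = 1) by (destruct ht as [-> | ->]; ring).
  set (window := fun X => Rmin (s * xl) (s * xu) <= X <= Rmax (s * xl) (s * xu) /\
                          Rmin (t * yl) (t * yu) <= b / X <= Rmax (t * yl) (t * yu)).
  (* In the coordinates [X = s x], [Y = t y] the branch is the arc [Y = b / X]. *)
  assert (branch : forall x y, T_alpha xl xu yl yu alpha (pt2 x y) -> 0 < s * x ->
            (s * x) * (t * y) = b /\ window (s * x)).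
  { intros x y hT hX; apply T_alpha_pt2 in hT; destruct hT as (hxy & bx & by_).
    assert (hXY : (s * x) * (t * y) = b) by (unfold b; rewrite <- hxy; ring).
    split; [exact hXY|]; split.
    - apply (sign_interval s xl xu); [exact hs | lra |].
      rewrite sign_involutive by assumption; lra.
    - replace (b / (s * x)) with (t * y) by (rewrite <- hXY; field; split; intros ->; lra).
      apply (sign_interval t yl yu); [exact ht | lra |].
      rewrite sign_involutive by assumption; lra. }
  assert (arc : forall X, 0 < X -> window X ->
                  T_alpha xl xu yl yu alpha (pt2 (s * X) (t * (b / X)))).
  { intros X hX [wx wy]; apply T_alpha_pt2; split; [|split].
    - replace (s * X * (t * (b / X))) with (s * t * b) by (field; lra).
      unfold b; replace (s * t * (s * t * alpha)) with (s * s * (t * t) * alpha) by ring.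
      rewrite hs2, ht2; ring.
    - apply (sign_interval s xl xu X); [exact hs | lra | exact wx].
    - apply (sign_interval t yl yu (b / X)); [exact ht | lra | exact wy]. }
  destruct (hyperbola_window (Rmin (s * xl) (s * xu)) (Rmax (s * xl) (s * xu))
              (Rmin (t * yl) (t * yu)) (Rmax (t * yl) (t * yu)) b hb)
    as [empty | (A & B & hAB & hwin)].
  - exists (box_cone 1 0 0 0); apply tight_box_cone; [|intros; lra].
    intros x y hT hX; exfalso; exact (empty _ hX (proj2 (branch x y hT hX))).
  - exists (arc_cone s t A B b); apply tight_arc_cone; auto.
    + intros x y hT hX; destruct (branch x y hT hX) as [hXY hw].
      split; [now apply hwin | exact hXY].
    + intros X hX; apply arc; [lra|]; apply hwin; lra.
Qed.

(* The box [[max xl 0, min xu 0] × [yl, yu]] is [{0} × [yl, yu]] when [0] lies in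
   [[xl, xu]], and empty otherwise. *)
Lemma tight_segment_x_eq_0 xl xu yl yu :
  tight_cone (T_alpha xl xu yl yu 0) (fun x _ => x = 0)
    (box_cone (Rmax xl 0) (Rmin xu 0) yl yu).
Proof.
  apply tight_box_cone.
  - intros x y hT ->; apply T_alpha_pt2 in hT; unfold Rmax, Rmin.
    do 2 destruct Rle_dec; lra.
  - intros x y hx hy; apply T_alpha_pt2; unfold Rmax, Rmin in hx.
    do 2 destruct Rle_dec; replace x with 0 by lra; repeat split; lra.
Qed.

Lemma tight_segment_y_eq_0 xl xu yl yu :
  tight_cone (T_alpha xl xu yl yu 0) (fun _ y => y = 0)
    (box_cone xl xu (Rmax yl 0) (Rmin yu 0)).
Proof.
  apply tight_box_cone.
  - intros x y hT ->; apply T_alpha_pt2 in hT; unfold Rmax, Rmin.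
    do 2 destruct Rle_dec; lra.
  - intros x y hx hy; apply T_alpha_pt2; unfold Rmax, Rmin in hy.
    do 2 destruct Rle_dec; replace y with 0 by lra; repeat split; lra.
Qed.

Theorem proposition12 (xl xu yl yu alpha : R) (hx : xl < xu) (hy : yl < yu) :
  soc_representable 2 (conv_hull (T_alpha xl xu yl yu alpha)).
Proof.
  assert (hcan : forall p, T_alpha xl xu yl yu alpha p -> canonical 2 p)
    by (intros p [c _]; exact c).
  assert (x_sign : alpha <> 0 -> forall x y, T_alpha xl xu yl yu alpha (pt2 x y) ->
                     0 < 1 * x \/ 0 < -1 * x).
  { intros ha x y hT; apply T_alpha_pt2 in hT; destruct hT as [hxy _].
    destruct (Rtotal_order x 0) as [? | [-> | ?]]; [right | exfalso | left]; lra. }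
  destruct (Rtotal_order alpha 0) as [neg | [zero | pos]].
  - destruct (tight_cone_hyperbola_branch xl xu yl yu alpha 1 (-1)) as [P1 h1]; try lra.
    destruct (tight_cone_hyperbola_branch xl xu yl yu alpha (-1) 1) as [P2 h2]; try lra.
    apply (soc_representable_conv_hull_two_cones _ _ _ P1 P2 hcan h1 h2).
    apply x_sign; lra.
  - subst alpha.
    apply (soc_representable_conv_hull_two_cones _ _ _ _ _ hcan
             (tight_segment_x_eq_0 xl xu yl yu) (tight_segment_y_eq_0 xl xu yl yu)).
    intros x y hT; apply T_alpha_pt2 in hT; now apply Rmult_integral.
  - destruct (tight_cone_hyperbola_branch xl xu yl yu alpha 1 1) as [P1 h1]; try lra.
    destruct (tight_cone_hyperbola_branch xl xu yl yu alpha (-1) (-1)) as [P2 h2]; try lra.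
    apply (soc_representable_conv_hull_two_cones _ _ _ P1 P2 hcan h1 h2).
    apply x_sign; lra.
Qed.
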